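(* Let $X$ be the subshift obtained from the marker construction described in the context, and $\mu$ its unique shift-invariant Borel probability measure. Let $j\in\mathbb{N}$ and let $C_1,\dots,C_p$ be unpermuted words in $\mathcal{C}_j$ such that the concatenation $C_1\cdots C_p$ is a subword of some element of $\mathcal{C}_{j+1}$. Then $\mu([C_1]) = \mu([C_1\cdots C_p])$, where $[u] = \{x\in X : x_{[0,|u|)} = u\}$.
   Context: Marker construction. Let $l_1$ be a sufficiently large perfect square and $N_1 = 2^{\sqrt{l_1}}$. Let $\mathcal{C}_1$ be a set of $N_1$ binary words of length $l_1$, each beginning with $001$, such that the word $00$ occurs in each element of $\mathcal{C}_1$ only as its prefix. Inductively, given a set $\mathcal{C}_j$ of $N_j$ distinct words of length $l_j$ with an ordering $\mathcal{C}_j = \{u_1^{(j)},\dots,u_{N_j}^{(j)}\}$, let $P_j = \{2\}\cup\{i^2 : 2 \le i \le \lfloor\sqrt{N_j}\rfloor\}$, and let $\mathcal{C}_{j+1}$ be the set of all words $u^{(j)}_{\pi(1)}\cdots u^{(j)}_{\pi(N_j)}$ where $\pi$ ranges over permutations of $\{1,\dots,N_j\}$ fixing every element outside $P_j$. Thus $N_{j+1} = (\lfloor\sqrt{N_j}\rfloor)!$, $l_{j+1} = l_j N_j$. The ordering of $\mathcal{C}_{j+1}$ is arbitrary except that its first element is $u_1^{(j)}u_2^{(j)}\cdots u_{N_j}^{(j)}$. A word $u_i^{(j)}$ is permuted if $i \in P_j$ and unpermuted otherwise. $X \subset \{0,1\}^{\mathbb{Z}}$ is the set of bi-infinite sequences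 each finite subword of which is a subword of some word in $\bigcup_j \mathcal{C}_j$; it is uniquely ergodic. *)

From HB Require Import structures.
From mathcomp Require Import all_boot all_order all_algebra all_fingroup.
From mathcomp Require Import all_classical all_reals all_analysis.
Set Implicit Arguments. Unset Strict Implicit. Unset Printing Implicit Defensive.
Import Order.TTheory GRing.Theory Num.Theory.
Local Open Scope classical_set_scope.

(* [permuted_index N i]: the 1-based index i belongs to
   P = {2} ∪ {k^2 : 2 <= k <= floor(sqrt N)}  (k <= floor(sqrt N) <-> k*k <= N). *)
Definition permuted_index (N i : nat) : Prop :=
  i = 2%N \/ exists k : nat, (2 <= k)%N /\ (k * k <= N)%N /\ i = (k * k)%N.

(* u_{pi(1)} ... u_{pi(N)} for an ordered list Cj = [u_1; ...; u_N] (stored 0-based). *)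
Definition concat_perm (Cj : seq (seq bool)) (pi : 'S_(size Cj)) : seq bool :=
  flatten [seq nth [::] Cj (pi i) | i <- enum 'I_(size Cj)].

Arguments concat_perm : clear implicits.

Definition base_level (s : nat) (C1 : seq (seq bool)) : Prop :=
  uniq C1 /\ size C1 = (2 ^ s)%N /\
  forall w, w \in C1 ->
    [/\ size w = (s * s)%N,
        take 3 w = [:: false; false; true] &
        forall i : nat, (0 < i)%N -> nth true w i = false -> nth true w i.+1 = false -> False].

Definition next_level (Cj Cj1 : seq (seq bool)) : Prop :=
  [/\ uniq Cj1,
      head [::] Cj1 = flatten Cj &
      forall w, w \in Cj1 <->
        exists pi : 'S_(size Cj),
          (forall i : 'I_(size Cj), ~ permuted_index (size Cj) i.+1 -> pi i = i) /\
          w = concat_perm Cj pi].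

(* C n is the ordered list C_{n+1} of the paper (0-based levels). *)
Definition marker_construction (s : nat) (C : nat -> seq (seq bool)) : Prop :=
  base_level s (C 0%N) /\ forall j, next_level (C j) (C j.+1).

Definition unpermuted_in (Cj : seq (seq bool)) (w : seq bool) : Prop :=
  w \in Cj /\ ~ permuted_index (size Cj) (index w Cj).+1.

Definition window (x : int -> bool) (a : int) (n : nat) : seq bool :=
  [seq x (a + i%:Z)%R | i <- iota 0 n].

Definition subshift (C : nat -> seq (seq bool)) : set (int -> bool) :=
  [set x | forall (a : int) (n : nat), exists j w, w \in C j /\ infix (window x a n) w].

Definition shift (x : int -> bool) : int -> bool := fun n => x (n + 1)%R.

(* Cylinder sets {x : x_[a, a+|u|) = u}; they generate the Borel sigma-algebra
   of the product topology on {0,1}^Z. *)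
Definition cylinders : set (set (int -> bool)) :=
  [set A | exists (a : int) (u : seq bool), A = [set x | window x a (size u) = u]].

Definition Omega := g_sigma_algebraType cylinders.

Definition cyl (X : set Omega) (u : seq bool) : set Omega :=
  X `&` [set x | window x 0 (size u) = u].

Definition shift_invariant_on {R : realType} (X : set Omega)
    (mu : probability Omega R) : Prop :=
  mu X = 1%E /\ forall A : set Omega, measurable A -> mu (shift @^-1` A) = mu A.

From HB Require Import structures.
From mathcomp Require Import all_boot all_order all_algebra all_fingroup.
From mathcomp Require Import all_classical all_reals all_analysis.
From mathcomp Require Import zify.

(* The two cylinder sets are in fact equal, so no property of the measure is
   needed.  Every word of C_{j+1} is a concatenation of the words of C_j in
   which each unpermuted word u_i occupies its own slot i.  Moreover the levels
   are recognizable: an occurrence of a C_m-word inside a concatenation of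
   C_m-words starts at a block boundary.  For m = 0 this holds because 00 occurs
   only as a prefix; for m + 1 it follows from level m, because every word of
   C_{m+1} begins with the unpermuted word u_1, which is found only in slot 1.
   Hence, in a point of X, an occurrence of the unpermuted word C_1 = u_r sits
   in slot r of some C_{j+1}-word, and the following slots hold the unpermuted
   words u_{r+1}, ..., which are C_2, ..., C_p since C_1 ... C_p is a subword
   of a C_{j+1}-word. *)

Set Implicit Arguments. Unset Strict Implicit. Unset Printing Implicit Defensive.
Local Open Scope classical_set_scope.

Section UniformFlatten.
Variables (T : eqType) (l : nat).
Implicit Types ws : seq (seq T).

Lemma size_flatten_uniform ws :
  {in ws, forall w, size w = l} -> size (flatten ws) = size ws * l.
Proof.
elim: ws => //= w ws IH Hws.
by rewrite size_cat Hws ?mem_head // IH ?mulSn // => v /(mem_behead (s := w :: ws)) /Hws.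
Qed.

Lemma drop_flatten_uniform ws t :
  {in ws, forall w, size w = l} -> drop (t * l) (flatten ws) = flatten (drop t ws).
Proof.
elim: ws t => [//|w ws IH] [|t] Hws /=; first by rewrite mul0n drop0.
have Hw := Hws w (mem_head _ _).
rewrite drop_cat Hw mulSn ltnNge leq_addr /= addKn IH // => v hv.
exact: Hws (mem_behead (s := w :: ws) hv).
Qed.

Lemma take_flatten_uniform ws p :
  {in ws, forall w, size w = l} -> take (p * l) (flatten ws) = flatten (take p ws).
Proof.
elim: ws p => [//|w ws IH] [|p] Hws /=; first by rewrite mul0n take0.
have Hw := Hws w (mem_head _ _).
rewrite take_cat Hw mulSn ltnNge leq_addr /= addKn IH // => v hv.
exact: Hws (mem_behead (s := w :: ws) hv).
Qed.

Lemma flatten_uniform_inj (xs ys : seq (seq T)) : 0 < l ->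
  {in xs, forall w, size w = l} -> {in ys, forall w, size w = l} ->
  flatten xs = flatten ys -> xs = ys.
Proof.
move=> l_gt0 Hxs Hys Exy; apply: eq_from_flatten_shape => //.
have shapeE ws : {in ws, forall w, size w = l} -> shape ws = nseq (size ws) l.
  move=> Hws; rewrite -(size_map size); by apply/all_pred1P/allP => _ /mapP [w /Hws -> ->] /=.
have /eqP := congr1 size Exy.
rewrite !size_flatten_uniform // eqn_pmul2r // => /eqP sizeE.
by rewrite !shapeE // sizeE.
Qed.

Lemma take_drop_flatten_uniform ws t b n :
  {in ws, forall w, size w = l} -> t < size ws -> b + n <= l ->
  take n (drop (t * l + b) (flatten ws)) = take n (drop b (nth [::] ws t)).
Proof.
move=> Hws ht hbn; have Ht := Hws _ (mem_nth [::] ht).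
rewrite addnC -drop_drop drop_flatten_uniform // (drop_nth [::] ht) /= drop_cat Ht.
case: ltnP => hb; first by rewrite takel_cat // size_drop Ht leq_subRL // ltnW.
have -> : n = 0 by lia.
by rewrite !take0.
Qed.

Lemma nth_flatten_uniform ws t c x0 :
  {in ws, forall w, size w = l} -> t < size ws -> c < l ->
  nth x0 (flatten ws) (t * l + c) = nth x0 (nth [::] ws t) c.
Proof.
move=> Hws ht hc; rewrite -nth_drop drop_flatten_uniform // (drop_nth [::] ht) /=.
by rewrite nth_cat (Hws _ (mem_nth _ ht)) hc.
Qed.

End UniformFlatten.

Lemma infix_take_drop (T : eqType) (u w : seq T) :
  infix u w -> exists2 a, take (size u) (drop a w) = u & a + size u <= size w.
Proof.
move/infixP => [s1 [s2 ->]]; exists (size s1); first by rewrite drop_size_cat // take_size_cat.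
by rewrite !size_cat leq_add2l leq_addr.
Qed.

Lemma take_prefix_cat (T : Type) (u v w : seq T) :
  take (size (u ++ v)) w = u ++ v -> take (size u) w = u.
Proof.
move=> E; rewrite -(take_takel _ (_ : size u <= size (u ++ v))) ?E ?take_size_cat //.
by rewrite size_cat leq_addr.
Qed.

Lemma size_window (x : int -> bool) a n : size (window x a n) = n.
Proof. by rewrite size_map size_iota. Qed.

Lemma window_take (x : int -> bool) a k n : take k (window x a n) = window x a (minn k n).
Proof. by rewrite /window -map_take take_iota. Qed.

Definition marker_word (l : nat) (w : seq bool) : Prop :=
  [/\ size w = l, take 3 w = [:: false; false; true] &
      forall i : nat, 0 < i -> nth true w i = false -> nth true w i.+1 = false -> False].

Lemma marker_word_prefix l w : marker_word l w ->
  [/\ nth true w 0 = false, nth true w 1 = false & nth true w 2 = true].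
Proof. by case=> _ prefix_w _; split; rewrite -(nth_take true (_ : _ < 3)) // prefix_w. Qed.

Lemma marker_word_size l w : marker_word l w -> 3 <= l.
Proof. by case=> <- prefix_w _; move: (congr1 size prefix_w); rewrite size_take_min /=; lia. Qed.

(* A block boundary is the only place where [001] can start. *)
Lemma marker_occurrence_dvd l ws v a : {in ws, forall w, marker_word l w} ->
  marker_word l v -> take l (drop a (flatten ws)) = v -> l %| a.
Proof.
move=> Hws Hv E; have l_ge3 := marker_word_size Hv.
have [v0 v1 v2] := marker_word_prefix Hv.
have Hsz : {in ws, forall w, size w = l} by move=> w /Hws [].
have fit : a + l <= size ws * l.
  rewrite -(size_flatten_uniform Hsz); move: (congr1 size E); case: Hv => -> _ _.
  by rewrite size_take_min size_drop; lia.
have bit i : i < l -> nth true (flatten ws) (a + i) = nth true v i.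
  by move=> hi; rewrite -E nth_take // nth_drop.
rewrite /dvdn; apply/eqP; have aE := divn_eq a l.
have l_gt0 : 0 < l by lia.
move: aE (ltn_pmod a l_gt0); set t := a %/ l; set b := a %% l => aE b_lt.
case: (posnP b) => // b_gt0.
have ht : t < size ws by nia.
have [_ _ no00] := Hws _ (mem_nth [::] ht).
case: (ltnP b.+1 l) => hb.
- exfalso; apply: (no00 b b_gt0); rewrite -(nth_flatten_uniform _ Hsz) //.
  + by rewrite -aE -(addn0 a) bit.
  + by rewrite addnS -aE -(addn1 a) bit // ltnW.
- have ht1 : t.+1 < size ws by nia.
  have [_ t1_1 _] := marker_word_prefix (Hws _ (mem_nth [::] ht1)).
  move: v2; rewrite -bit; last exact: (leq_trans _ l_ge3).
  by rewrite (_ : a + 2 = t.+1 * l + 1) ?nth_flatten_uniform ?t1_1 //; nia.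
Qed.

Definition permn n (pi : 'S_n) (i : nat) : nat :=
  if (insub i : option 'I_n) is Some o then val (pi o) else i.

Section PermNat.
Variables (n : nat) (pi : 'S_n).

Lemma permn_val (o : 'I_n) : permn pi o = val (pi o).
Proof. by rewrite /permn valK. Qed.

Lemma permn_ord i (hi : i < n) : permn pi i = val (pi (Ordinal hi)).
Proof. exact: (permn_val (Ordinal hi)). Qed.

Lemma permn_lt i : i < n -> permn pi i < n.
Proof. by move=> hi; rewrite (permn_ord hi) ltn_ord. Qed.

Lemma permn_inj i k : i < n -> k < n -> permn pi i = permn pi k -> i = k.
Proof.
move=> hi hk; rewrite (permn_ord hi) (permn_ord hk) => /val_inj/perm_inj.
by move/(congr1 val).
Qed.

End PermNat.

Lemma not_permuted_index1 N : ~ permuted_index N 1.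
Proof. case=> [//|[k [k_ge2 [_ k2]]]]; nia. Qed.

Definition fixes_unpermuted N (pi : 'S_N) : Prop :=
  forall i : 'I_N, ~ permuted_index N i.+1 -> pi i = i.

Lemma permn_unpermuted N (pi : 'S_N) i : fixes_unpermuted pi ->
  i < N -> ~ permuted_index N i.+1 -> permn pi i = i.
Proof. by move=> Hpi hi hu; rewrite (permn_ord pi hi) Hpi. Qed.

Section ConcatPerm.
Variables (Cj : seq (seq bool)) (pi : 'S_(size Cj)).

Lemma concat_permE :
  concat_perm Cj pi = flatten [seq nth [::] Cj (permn pi i) | i <- iota 0 (size Cj)].
Proof.
rewrite /concat_perm -val_enum_ord -map_comp; congr flatten.
by apply: eq_map => o /=; rewrite permn_val.
Qed.

Lemma size_concat_perm l : {in Cj, forall w, size w = l} ->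
  size (concat_perm Cj pi) = l * size Cj.
Proof.
move=> HCj; rewrite concat_permE (size_flatten_uniform (l := l)) ?size_map ?size_iota 1?mulnC //.
by move=> w /mapP [i]; rewrite mem_iota => /andP [_ hi] ->; rewrite HCj // mem_nth // permn_lt.
Qed.

Lemma take_drop_concat_perm l r p : {in Cj, forall w, size w = l} -> r + p <= size Cj ->
  take (p * l) (drop (r * l) (concat_perm Cj pi)) =
  flatten [seq nth [::] Cj (permn pi i) | i <- iota r p].
Proof.
move=> HCj hrp.
have Hblocks : {in [seq nth [::] Cj (permn pi i) | i <- iota 0 (size Cj)],
                 forall w, size w = l}.
  by move=> w /mapP [i]; rewrite mem_iota => /andP [_ hi] ->; rewrite HCj // mem_nth // permn_lt.
rewrite concat_permE drop_flatten_uniform // take_flatten_uniform; last first.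
  by move=> w /mem_drop; apply: Hblocks.
rewrite -map_drop -map_take drop_iota take_iota add0n (minn_idPl _) //; lia.
Qed.

End ConcatPerm.

Lemma concat_perm1 (Cj : seq (seq bool)) : concat_perm Cj 1 = flatten Cj.
Proof.
rewrite concat_permE; congr flatten; rewrite -[RHS](mkseq_nth [::] Cj).
by apply/eq_in_map => i; rewrite mem_iota => /andP [_ hi]; rewrite (permn_ord _ hi) perm1.
Qed.

Section MarkerConstruction.
Variables (s : nat) (C : nat -> seq (seq bool)).
Hypotheses (C0_base : base_level s (C 0)) (C_next : forall j, next_level (C j) (C j.+1)).

Fixpoint level_len m : nat := if m is m'.+1 then level_len m' * size (C m') else s * s.

Lemma mem_level_succ m w : w \in C m.+1 <->
  exists2 pi : 'S_(size (C m)), fixes_unpermuted pi & w = concat_perm (C m) pi.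
Proof. by case: (C_next m) => _ _ ->; split=> [[pi []]|[pi]]; exists pi. Qed.

Lemma level_gt0 m : 0 < size (C m).
Proof.
case: m => [|m]; first by case: C0_base => _ [-> _]; rewrite expn_gt0.
have : flatten (C m) \in C m.+1.
  by apply/mem_level_succ; exists 1%g; [move=> i _; rewrite perm1 | rewrite concat_perm1].
by case: (C m.+1).
Qed.

Lemma level_uniq m : uniq (C m).
Proof. by case: m => [|m]; [case: C0_base | case: (C_next m)]. Qed.

Lemma marker_word_level0 w : w \in C 0 -> marker_word (level_len 0) w.
Proof. by case: C0_base => _ [_ HC] /HC. Qed.

Lemma size_level_word m : {in C m, forall w, size w = level_len m}.
Proof.
elim: m => [|m IH] w; first by case/marker_word_level0.
by case/mem_level_succ => pi _ ->; rewrite (size_concat_perm _ IH).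
Qed.

Lemma level_len_gt0 m : 0 < level_len m.
Proof.
elim: m => [|m IH]; last by rewrite muln_gt0 IH level_gt0.
exact: leq_trans (marker_word_size (marker_word_level0 (mem_nth [::] (level_gt0 0)))).
Qed.

Lemma leq_level_len m k : m <= k -> level_len m <= level_len k.
Proof.
elim: k => [|k IH]; first by rewrite leqn0 => /eqP ->.
rewrite leq_eqVlt => /orP [/eqP -> //|lt_mk].
by apply: leq_trans (IH lt_mk) _; rewrite /= leq_pmulr // level_gt0.
Qed.

Lemma flatten_level_succ m ws : {subset ws <= C m.+1} ->
  exists2 B, {subset B <= C m} & flatten ws = flatten B.
Proof.
elim: ws => [|w ws IH] Hws /=; first by exists [::].
have [B HB ->] := IH (fun v hv => Hws v (mem_behead (s := w :: ws) hv)).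
have /mem_level_succ [pi _ ->] := Hws w (mem_head _ _).
exists ([seq nth [::] (C m) (permn pi i) | i <- iota 0 (size (C m))] ++ B).
  move=> v; rewrite mem_cat => /orP [/mapP [i] | /HB //].
  by rewrite mem_iota => /andP [_ hi] ->; rewrite mem_nth // permn_lt.
by rewrite /= concat_permE flatten_cat.
Qed.

Lemma flatten_level_le m k ws : m <= k -> {subset ws <= C k} ->
  exists2 B, {subset B <= C m} & flatten ws = flatten B.
Proof.
elim: k ws => [|k IH] ws; first by rewrite leqn0 => /eqP -> Hws; exists ws.
rewrite leq_eqVlt => /orP [/eqP -> Hws|lt_mk Hws]; first by exists ws.
by have [B HB ->] := flatten_level_succ Hws; apply: IH.
Qed.

Lemma unpermuted_nth m i : i < size (C m) ->
  unpermuted_in (C m) (nth [::] (C m) i) -> ~ permuted_index (size (C m)) i.+1.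
Proof. by move=> hi [_]; rewrite index_uniq ?level_uniq. Qed.

Lemma take_drop_level_succ m ws t r p : {subset ws <= C m.+1} ->
  t < size ws -> r + p <= size (C m) ->
  exists2 pi : 'S_(size (C m)), fixes_unpermuted pi &
    take (p * level_len m) (drop (t * level_len m.+1 + r * level_len m) (flatten ws)) =
    flatten [seq nth [::] (C m) (permn pi i) | i <- iota r p].
Proof.
move=> Hws ht hrp; have /mem_level_succ [pi Hpi Et] := Hws _ (mem_nth [::] ht).
exists pi => //; rewrite take_drop_flatten_uniform //; last by rewrite /= -mulnDl mulnC leq_mul2l hrp orbT.
  by rewrite Et take_drop_concat_perm // => w /size_level_word.
by move=> w /Hws /size_level_word.
Qed.

Lemma unpermuted_occurrence_offset m ws a r : {subset ws <= C m.+1} ->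
  r < size (C m) -> ~ permuted_index (size (C m)) r.+1 ->
  level_len m %| a -> take (level_len m) (drop a (flatten ws)) = nth [::] (C m) r ->
  exists2 t, t < size ws & a = t * level_len m.+1 + r * level_len m.
Proof.
set l := level_len m; set N := size (C m) => Hws hr hu /dvdnP [q ->] E.
have qE := divn_eq q N; have r0_lt := ltn_pmod q (level_gt0 m).
move: qE r0_lt; set t := q %/ N; set r0 := q %% N => qE r0_lt; clearbody t r0.
have aE : q * l = t * level_len m.+1 + r0 * l by rewrite {1}qE mulnDl /= mulnAC mulnA.
have Hsz : {in ws, forall w, size w = level_len m.+1} by move=> w /Hws /size_level_word.
have ht : t < size ws.
  have LN_gt0 : 0 < l * N by rewrite muln_gt0 level_len_gt0 level_gt0.
  rewrite -(ltn_pmul2r LN_gt0); move: (congr1 size E) (level_len_gt0 m).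
  rewrite size_take_min size_drop (size_flatten_uniform Hsz).
  by rewrite (size_level_word (mem_nth [::] hr)) aE /= -/l -/N; lia.
have r0_fits : r0 + 1 <= N by rewrite addn1.
have [pi Hpi] := take_drop_level_succ Hws ht r0_fits.
rewrite mul1n -aE E /= cats0 => /eqP; rewrite nth_uniq ?level_uniq ?permn_lt // => /eqP Er.
have r0E : r0 = r.
  by apply: (permn_inj (pi := pi)); rewrite // -Er (permn_unpermuted Hpi hr hu).
by exists t; rewrite // -r0E.
Qed.

Lemma take_drop_level_unpermuted m ws t r p : {subset ws <= C m.+1} ->
  t < size ws -> r + p <= size (C m) ->
  (forall i, r <= i < r + p -> ~ permuted_index (size (C m)) i.+1) ->
  take (p * level_len m) (drop (t * level_len m.+1 + r * level_len m) (flatten ws)) =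
  flatten [seq nth [::] (C m) i | i <- iota r p].
Proof.
move=> Hws ht hrp hu; have [pi Hpi ->] := take_drop_level_succ Hws ht hrp.
congr flatten; apply/eq_in_map => i; rewrite mem_iota => /andP [r_le_i i_lt].
by rewrite (permn_unpermuted Hpi (leq_trans i_lt hrp)) //; apply: hu; rewrite r_le_i.
Qed.

Lemma level_occurrence_dvd m ws v a : {subset ws <= C m} -> v \in C m ->
  take (level_len m) (drop a (flatten ws)) = v -> level_len m %| a.
Proof.
elim: m ws v a => [|m IH] ws v a Hws Hv E.
  exact: marker_occurrence_dvd (fun w hw => marker_word_level0 (Hws w hw)) (marker_word_level0 Hv) E.
have N_gt0 := level_gt0 m.
have [B HB EB] := flatten_level_succ Hws.
have /mem_level_succ [pi Hpi Ev] := Hv.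
(* every word of C_{m+1} starts with the first word of C_m, whose index 1 is unpermuted *)
have v_head : take (level_len m) v = nth [::] (C m) 0.
  have := take_drop_concat_perm pi (r := 0) (p := 1) (@size_level_word m) N_gt0.
  rewrite mul1n mul0n drop0 /= cats0 -Ev => ->.
  by rewrite (permn_unpermuted Hpi N_gt0 (@not_permuted_index1 _)).
have E1 : take (level_len m) (drop a (flatten ws)) = nth [::] (C m) 0.
  by rewrite -v_head -E take_takel //= leq_pmulr.
have l_dvd_a : level_len m %| a.
  by apply: (IH B (nth [::] (C m) 0)); rewrite ?mem_nth // -EB.
have [t _ ->] := unpermuted_occurrence_offset Hws N_gt0 (@not_permuted_index1 _) l_dvd_a E1.
by rewrite mul0n addn0 dvdn_mull.
Qed.

Lemma unpermuted_infix_blocks j Cs w : {in Cs, forall v, unpermuted_in (C j) v} ->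
  w \in C j.+1 -> infix (flatten Cs) w ->
  exists2 r, r + size Cs <= size (C j) &
    Cs = [seq nth [::] (C j) i | i <- iota r (size Cs)].
Proof.
case: Cs => [|C1 Cs'] HCs Hw Hinf; first by exists 0.
set Cs := C1 :: Cs' in HCs Hinf *.
have Hsz : {in Cs, forall v, size v = level_len j} by move=> v /HCs [/size_level_word].
have size_Cs := size_flatten_uniform Hsz.
have [pi Hpi Ew] := (mem_level_succ _ _).1 Hw.
have Hblocks : {subset [seq nth [::] (C j) (permn pi i) | i <- iota 0 (size (C j))] <= C j}.
  by move=> v /mapP [i]; rewrite mem_iota => /andP [_ hi] ->; rewrite mem_nth // permn_lt.
have [a Ea Sa] := infix_take_drop Hinf.
have /dvdnP [r aE] : level_len j %| a.
  apply: level_occurrence_dvd Hblocks (_ : C1 \in C j) _; first by case: (HCs C1 (mem_head _ _)).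
  by rewrite -concat_permE -Ew -(Hsz C1 (mem_head _ _)) (take_prefix_cat Ea).
have fit : r + size Cs <= size (C j).
  move: Sa; rewrite Ew (size_concat_perm _ (@size_level_word j)) size_Cs aE -mulnDl mulnC.
  by rewrite leq_pmul2l // level_len_gt0.
have CsE : Cs = [seq nth [::] (C j) (permn pi i) | i <- iota r (size Cs)].
  apply: (flatten_uniform_inj (level_len_gt0 j) Hsz).
    move=> v /mapP [i]; rewrite mem_iota => /andP [_ hi] ->.
    exact: size_level_word (mem_nth [::] (permn_lt pi (leq_trans hi fit))).
  by rewrite -(take_drop_concat_perm pi (@size_level_word j) fit) -Ew -aE -size_Cs Ea.
exists r => //; rewrite {1}CsE; apply/eq_in_map => i; rewrite mem_iota => /andP [r_le i_lt].
have i_ltN : i < size (C j) := leq_trans i_lt fit.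
have c_in : nth [::] (C j) (permn pi i) \in Cs.
  by rewrite CsE; apply/mapP; exists i; rewrite // mem_iota r_le.
have hu := unpermuted_nth (permn_lt pi i_ltN) (HCs _ c_in).
(* the block at position i is unpermuted, so pi fixes its index, which forces it to be i *)
have := permn_unpermuted Hpi (permn_lt pi i_ltN) hu.
by move/(permn_inj (permn_lt pi i_ltN) i_ltN) ->.
Qed.

Lemma subshift_window_level j (x : int -> bool) n : subshift C x -> level_len j < n ->
  exists2 ws, {subset ws <= C j.+1} & exists a, take n (drop a (flatten ws)) = window x 0%R n.
Proof.
move=> Xx ln_lt; have [k [w [Hw Hinfw]]] := Xx 0%R n.
have [a Ea Sa] := infix_take_drop Hinfw; rewrite size_window in Ea Sa.
have lt_jk : j < k.
  rewrite ltnNge; apply/negP => /leq_level_len le_kj.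
  by move: Sa; rewrite (size_level_word Hw); lia.
have w_sub : {subset [:: w] <= C k} by move=> v; rewrite mem_seq1 => /eqP ->.
have [ws Hws Ews] := flatten_level_le lt_jk w_sub.
by exists ws => //; exists a; rewrite -Ews /= cats0.
Qed.

Lemma cyl_head_subset_flatten j Cs : Cs != [::] ->
  {in Cs, forall v, unpermuted_in (C j) v} ->
  (exists2 w, w \in C j.+1 & infix (flatten Cs) w) ->
  cyl (subshift C) (head [::] Cs) `<=` cyl (subshift C) (flatten Cs).
Proof.
move=> Cs_ne HCs [w Hw Hinf] x [Xx /= x_head]; split => //=.
have [r fit CsE] := unpermuted_infix_blocks HCs Hw Hinf.
have p_gt0 : 0 < size Cs by rewrite lt0n size_eq0.
have r_in : r <= r < r + size Cs by rewrite leqnn -addn1 leq_add2l.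
have r_lt : r < size (C j) := leq_trans (proj2 (andP r_in)) fit.
have r_unperm i : r <= i < r + size Cs -> ~ permuted_index (size (C j)) i.+1.
  case/andP => r_le i_lt; have i_ltN := leq_trans i_lt fit.
  have c_in : nth [::] (C j) i \in Cs.
    by rewrite CsE; apply/mapP; exists i; rewrite // mem_iota r_le.
  exact: unpermuted_nth i_ltN (HCs _ c_in).
have head_r : head [::] Cs = nth [::] (C j) r by rewrite CsE; case: (size Cs) p_gt0.
have Hsz : {in Cs, forall v, size v = level_len j} by move=> v /HCs [/size_level_word].
have size_fc := size_flatten_uniform Hsz.
have l_lt : level_len j < (size (flatten Cs)).+1 by rewrite ltnS size_fc leq_pmull.
have [ws Hws [a Ea]] := subshift_window_level Xx l_lt.
have r_occ : take (level_len j) (drop a (flatten ws)) = nth [::] (C j) r.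
  rewrite -(take_takel _ (ltnW l_lt)) Ea window_take (minn_idPl (ltnW l_lt)).
  by move: x_head; rewrite head_r (size_level_word (mem_nth [::] r_lt)).
have [B HB EB] := flatten_level_succ Hws.
have l_dvd_a : level_len j %| a.
  by apply: (level_occurrence_dvd HB (mem_nth [::] r_lt)); rewrite -EB.
have [t ht aE] := unpermuted_occurrence_offset Hws r_lt (r_unperm r r_in) l_dvd_a r_occ.
rewrite -(minn_idPl (leqnSn (size (flatten Cs)))) -window_take -Ea take_takel ?leqnSn //.
by rewrite aE size_fc take_drop_level_unpermuted // -CsE.
Qed.

End MarkerConstruction.

Lemma cyl_cat_subset (X : set Omega) (u v : seq bool) : cyl X (u ++ v) `<=` cyl X u.
Proof.
move=> x [Xx /= x_uv]; split => //=.
move: (congr1 (take (size u)) x_uv); rewrite window_take take_size_cat // (minn_idPl _) //.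
by rewrite size_cat leq_addr.
Qed.

Theorem lemma4p3 :
  exists L : nat,
  forall (s : nat) (C : nat -> seq (seq bool)),
    (L <= s * s)%N ->
    marker_construction s C ->
  forall (R : realType) (mu : probability Omega R),
    shift_invariant_on (subshift C) mu ->
    (forall nu : probability Omega R, shift_invariant_on (subshift C) nu ->
       forall A : set Omega, measurable A -> nu A = mu A) ->
  forall (j : nat) (Cs : seq (seq bool)),
    Cs != [::] ->
    (forall w, w \in Cs -> unpermuted_in (C j) w) ->
    (exists2 w, w \in C j.+1 & infix (flatten Cs) w) ->
    mu (cyl (subshift C) (head [::] Cs)) = mu (cyl (subshift C) (flatten Cs)).
Proof.
exists 0 => s C _ [C0_base C_next] R mu _ _ j Cs Cs_ne HCs Hinf.
congr (mu _); apply/seteqP; split.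
  exact: (cyl_head_subset_flatten C0_base C_next Cs_ne HCs Hinf).
by case: Cs Cs_ne {HCs Hinf} => // C1 Cs' _; exact: (@cyl_cat_subset _ C1 (flatten Cs')).
Qed.
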